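(* Fix $c\in\{0,1\}$. Consider the family of distributions on $(0,1)\cup\{c\}$ with densities, with respect to the measure $\lambda+\delta_c$ (where $\lambda$ is Lebesgue measure on $(0,1)$ and $\delta_c$ is the point mass at $c$), $$\mathrm{bi}_c(y;\alpha,\mu,\phi)=\begin{cases}\alpha, & y=c,\\ (1-\alpha)f(y;\mu,\phi), & y\in(0,1),\end{cases}$$ indexed by $(\alpha,\mu,\phi)\in(0,1)\times(0,1)\times(0,\infty)$, where $$f(y;\mu,\phi)=\frac{\Gamma(\phi)}{\Gamma(\mu\phi)\Gamma((1-\mu)\phi)}\,y^{\mu\phi-1}(1-y)^{(1-\mu)\phi-1},\quad y\in(0,1),$$ is the beta density with mean $\mu$ and precision $\phi$. (For $c=0$ this is the zero-inflated beta distribution $\mathrm{BEZI}(\alpha,\mu,\phi)$, and for $c=1$ the one-inflated beta distribution $\mathrm{BEOI}(\alpha,\mu,\phi)$.) Then this family (for either choice of $c$) is a three-parameter exponential family of full rank.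
   Context: A family of densities $\{p_\theta:\theta\in\Theta\}$ with respect to a measure $\nu$ on a space $\mathcal Y$ is called a $k$-parameter exponential family of full rank if there are a one-to-one map $\theta\mapsto\eta(\theta)\in\mathbb R^k$, a statistic $T=(t_1,\dots,t_k):\mathcal Y\to\mathbb R^k$, a real function $B^*$ and a positive function $h$ on $\mathcal Y$ such that $p_\theta(y)=\exp\{\eta(\theta)^\top T(y)-B^*(\eta(\theta))\}h(y)$ for all $y$ and $\theta$, where neither the components $t_1,\dots,t_k$ nor the components of $\eta$ satisfy a linear constraint, and the set $\{\eta(\theta):\theta\in\Theta\}$ contains a $k$-dimensional open rectangle. *)

From HB Require Import structures.
From mathcomp Require Import all_boot all_order all_algebra.
From mathcomp Require Import all_classical all_reals all_analysis.
Set Implicit Arguments. Unset Strict Implicit. Unset Printing Implicit Defensive.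
Import Order.TTheory GRing.Theory Num.Theory.
Import numFieldNormedType.Exports.
Local Open Scope classical_set_scope.
Local Open Scope ring_scope.

Definition Gamma (R : realType) (s : R) : R :=
  Rintegral (@lebesgue_measure R) `]0, +oo[
            (fun x => x `^ (s - 1) * expR (- x)).

Definition beta_density (R : realType) (mu phi y : R) : R :=
  Gamma phi / (Gamma (mu * phi) * Gamma ((1 - mu) * phi))
  * y `^ (mu * phi - 1) * (1 - y) `^ ((1 - mu) * phi - 1).

Definition Ysupp (R : realType) (c : R) : set R := `]0, 1[ `|` [set c].

Definition nu (R : realType) (c : R) : {measure set (measurableTypeR R) -> \bar R} :=
  measure_add
    (@mrestr _ (measurableTypeR R) R `]0, 1[ (@lebesgue_measure R) (measurable_itv _))
    (@dirac _ (measurableTypeR R) c R).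

Definition Theta (R : realType) : set (R * R * R) :=
  [set th | 0 < th.1.1 < 1 /\ 0 < th.1.2 < 1 /\ 0 < th.2].

Definition bi (R : realType) (c : R) (th : R * R * R) (y : R) : R :=
  let: (alpha, mu, phi) := th in
  if y == c then alpha else (1 - alpha) * beta_density mu phi y.

Definition dotv (R : realType) (k : nat) (a b : 'I_k -> R) : R :=
  \sum_(i < k) a i * b i.

Definition full_rank_exp_family (d : measure_display) (T : measurableType d)
    (R : realType) (nu0 : {measure set T -> \bar R}) (Y0 : set T)
    (P : Type) (Th : set P) (k : nat) (p : P -> T -> R) : Prop :=
  exists (eta : P -> 'I_k -> R) (Tst : T -> 'I_k -> R)
         (Bst : ('I_k -> R) -> R) (h : T -> R),
        (forall t1 t2, Th t1 -> Th t2 -> eta t1 = eta t2 -> t1 = t2) /\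
        (forall y, Y0 y -> 0 < h y) /\
        (forall th y, Th th -> Y0 y ->
           p th y = expR (dotv (eta th) (Tst y) - Bst (eta th)) * h y) /\
        (forall (a : 'I_k -> R) (b : R),
           {ae nu0, forall y, Y0 y -> dotv a (Tst y) = b} ->
           forall i, a i = 0) /\
        (forall (a : 'I_k -> R) (b : R),
           (forall th, Th th -> dotv a (eta th) = b) -> forall i, a i = 0) /\
        exists lo hi : 'I_k -> R,
          (forall i, lo i < hi i) /\
          (forall x : 'I_k -> R, (forall i, lo i < x i < hi i) ->
             exists2 th, Th th & eta th = x).

From HB Require Import structures.
From mathcomp Require Import all_boot all_order all_algebra.
From mathcomp Require Import all_classical all_reals all_analysis.
From mathcomp Require Import measurable_realfun exponential_distribution.
From mathcomp Require Import ring lra.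
Import Order.TTheory GRing.Theory Num.Theory.
Import numFieldNormedType.Exports.
Local Open Scope classical_set_scope.
Local Open Scope ring_scope.
Set Implicit Arguments. Unset Strict Implicit. Unset Printing Implicit Defensive.

(* With B(mu, phi) = Gamma(phi) / (Gamma(mu phi) Gamma((1 - mu) phi)), the map
   (alpha, mu, phi) |-> (ln (alpha / (1 - alpha)) - ln B(mu, phi), mu phi, (1 - mu) phi)
   is a bijection from the parameter space onto R x (0, +oo)^2, and with the
   statistic T(c) = (1, 0, 0), T(y) = (0, ln y, ln (1 - y)) on (0, 1) and the
   carrier h(y) = 1 / (y (1 - y)) the density is exp(eta . T - B*(eta)) h.  The
   logarithm ln B is meaningful because the Gamma integral is positive and finite.
   No linear relation a . T = b holds nu-a.e.: the atom at c gives a_0 = b, and by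
   continuity a_1 ln y + a_2 ln (1 - y) = b then holds on all of (0, 1), which forces
   a_1 = a_2 = b = 0.  None of this depends on where the atom c sits. *)

Section Gamma_positive.
Variable R : realType.
Local Notation mu := (@lebesgue_measure R).

Lemma ln_le_subr1 (y : R) : 0 < y -> ln y <= y - 1.
Proof.
by move=> y0; have := @le_ln1Dx R (y - 1); rewrite (addrC 1) subrK; apply; lra.
Qed.

Lemma integral_powR_itvcc1 (s a : R) : 0 < s -> 0 < a -> a < 1 ->
  (\int[mu]_(x in `[a, 1%R]) (x `^ (s - 1))%:E = ((1 - a `^ s) / s)%:E)%E.
Proof.
move=> s0 a0 a1.
pose F x := s^-1 * x `^ s.
have pos x : x \in `[a, 1] -> x \in `]0, +oo[.
  by rewrite !in_itv /= andbT => /andP[ax _]; exact: lt_le_trans ax.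
have dF : {in `]0, +oo[, forall x, derivable F x 1}.
  by move=> x x0; apply: derivableM => //; exact: derivable_powR.
have cf : {within `[a, 1], continuous (fun x => x `^ (s - 1))}.
  apply: derivable_within_continuous => x /pos x0; exact: derivable_powR.
have dLR : derivable_oo_LRcontinuous F a 1.
  have /(continuous_within_itvP _ a1)[_ ? ?] : {within `[a, 1], continuous F}.
    by apply: derivable_within_continuous => x /pos; exact: dF.
  by split => // x /subset_itv_oo_cc /pos; exact: dF.
have F' : {in `]a, 1[, F^`()%classic =1 (fun x => x `^ (s - 1))}.
  move=> x /subset_itv_oo_cc /pos x0.
  rewrite derive1E deriveM ?derive_cst ?scaler0 ?addr0; last 2 first.
  - exact: derivable_cst.
  - exact: derivable_powR.
  rewrite -derive1E powR_derive1 // /GRing.scale /= mulrA mulVf ?mul1r //.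
  by rewrite gt_eqF.
rewrite (continuous_FTC2 a1 cf dLR F') /F powR1 -EFinB.
by congr EFin; rewrite -mulrBr mulrC.
Qed.

Lemma integral_powR_itvoc01_le (s : R) : 0 < s ->
  (\int[mu]_(x in `]0%R, 1%R]) (x `^ (s - 1))%:E <= s^-1%:E)%E.
Proof.
move=> s0.
pose a n : R := n.+2%:R^-1.
have a_gt0 n : 0 < a n by rewrite invr_gt0.
have a_lt1 n : a n < 1 by rewrite invf_lt1 // ltr1n.
have a_le m n : (m <= n)%N -> a n <= a m.
  by move=> mn; rewrite lef_pV2 ?posrE // ler_nat ltnS.
pose f x := (x `^ (s - 1))%:E.
pose g n : R -> \bar R := f \_ `[a n, 1].
have f_ge0 x : (0 <= f x)%E by rewrite lee_fin powR_ge0.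
have mg n : measurable_fun (`]0, 1] : set R) (g n).
  apply/measurable_restrict => //; apply: measurable_funTS.
  by apply/measurable_EFinP; exact: measurable_powR.
have g_ge0 n x : (0 <= g n x)%E by apply: erestrict_ge0 => y _.
have ndg x : {homo g^~ x : m n / (m <= n)%N >-> (m <= n)%E}.
  move=> m n mn; rewrite /g !patchE; case: ifPn => [|_]; last by case: ifP.
  rewrite !inE /= !in_itv /= => /andP[amx x1].
  by rewrite ifT // inE /= in_itv /= x1 andbT (le_trans (a_le _ _ mn)).
have -> : (\int[mu]_(x in `]0%R, 1%R]) f x =
           \int[mu]_(x in `]0%R, 1%R]) limn (g^~ x))%E.
  apply: eq_integral => x; rewrite inE /= in_itv /= => /andP[x0 x1].
  apply/esym/lim_near_cst => //; near=> n.
  rewrite /g patchE ifT // inE /= in_itv /= x1 andbT /a -(invrK x).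
  rewrite lef_pV2 ?posrE ?invr_gt0 //.
  have : x^-1 < n%:R by near: n; exact: nbhs_infty_gtr.
  by move/ltW/le_trans; apply; rewrite ler_nat -addn2 leq_addr.
rewrite monotone_convergence //.
apply: lime_le.
  apply: ereal_nondecreasing_is_cvgn => m n mn.
  by apply: ge0_le_integral => //; [exact: mg | exact: mg | move=> x _; exact: ndg].
near=> n; rewrite /g -integral_mkcondr setIidr; last first.
  move=> x /=; rewrite !in_itv /= => /andP[ax ->]; rewrite andbT.
  exact: lt_le_trans ax.
rewrite integral_powR_itvcc1 // lee_fin -[leRHS]mul1r ler_pM2r ?invr_gt0 //.
by rewrite lerBlDr lerDl powR_ge0.
Unshelve. all: by end_near. Qed.

Definition gamma_integrand (s x : R) : R := x `^ (s - 1) * expR (- x).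

Lemma gamma_integrand_ge0 s x : 0 <= gamma_integrand s x.
Proof. by rewrite mulr_ge0 ?powR_ge0 ?expR_ge0. Qed.

Lemma measurable_gamma_integrand s : measurable_fun setT (gamma_integrand s).
Proof. by apply: measurable_funM => //; apply: measurableT_comp. Qed.

Lemma gamma_integrand_itvcc12_ge s x : 0 < s -> 1 <= x <= 2 ->
  expR (-3) <= gamma_integrand s x.
Proof.
move=> s0 /andP[x1 x2]; have x0 : 0 < x by lra.
have lnx1 : ln x <= 1 by have := ln_le_subr1 x0; lra.
have lnx0 : 0 <= ln x by rewrite ln_ge0.
rewrite /gamma_integrand /powR gt_eqF // (_ : -3 = -1 + -2) ?expRD; last by ring.
apply: ler_pM; rewrite ?expR_ge0 // ler_expR; nra.
Qed.

(* [s ln x - x / 2] is maximal at [x = 2 s], and [x ^ (s - 1) <= x ^ s] for [x > 1]. *)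
Lemma gamma_integrand_le_exponential s x : 0 < s -> 1 < x ->
  gamma_integrand s x <=
  2 * expR (s * (ln (2 * s) - 1)) * exponential_pdf 2^-1 x.
Proof.
move=> s0 x1; have x0 : 0 < x by lra.
have lnx0 : 0 <= ln x by rewrite ln_ge0 // ltW.
have s2 : 0 < 2 * s by lra.
have h : s * (ln x - ln (2 * s)) <= x / 2 - s.
  have := ln_le_subr1 (divr_gt0 x0 s2).
  rewrite lnM ?posrE ?invr_gt0 // lnV ?posrE // => h.
  by rewrite (_ : x / 2 - s = s * (x / (2 * s) - 1)) ?ler_pM2l //; field; lra.
rewrite exponential_pdfE ?(ltW x0) // /gamma_integrand /powR gt_eqF //.
rewrite (_ : 2 * _ * _ = expR (s * (ln (2 * s) - 1)) * expR (- 2^-1 * x)).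
  by rewrite -!expRD ler_expR; nra.
by field.
Qed.

Lemma integral_gamma_integrand_ge s : 0 < s ->
  ((expR (-3))%:E <= \int[mu]_(x in `]0%R, +oo[) (gamma_integrand s x)%:E)%E.
Proof.
move=> s0.
apply: (@le_trans _ _ (\int[mu]_(x in `[1%R, 2%R]) (gamma_integrand s x)%:E)%E).
  rewrite -[X in (X <= _)%E]mule1 -[1%E]/(1%:E) (_ : 1%:E = mu `[1%R, 2%R]); last first.
    by rewrite lebesgue_measure_itv /= lte_fin ltr1n -EFinB; congr EFin; lra.
  rewrite -integral_cst //; apply: ge0_le_integral => //.
  - by move=> x _; rewrite lee_fin expR_ge0.
  - apply/measurable_EFinP; apply: measurable_funTS.
    exact: measurable_gamma_integrand.
  - move=> x; rewrite /= in_itv /= => x12.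
    by rewrite lee_fin gamma_integrand_itvcc12_ge.
apply: ge0_subset_integral => //.
- apply/measurable_EFinP; apply: measurable_funTS.
  exact: measurable_gamma_integrand.
- by move=> x _; rewrite lee_fin gamma_integrand_ge0.
- by move=> x /=; rewrite !in_itv /= andbT => /andP[x1 _]; exact: lt_le_trans x1.
Qed.

Lemma integral_gamma_integrand_lt_pinfty s : 0 < s ->
  (\int[mu]_(x in `]0%R, +oo[) (gamma_integrand s x)%:E < +oo)%E.
Proof.
move=> s0; set f := gamma_integrand s.
have mf : measurable_fun setT (EFin \o f).
  by apply/measurable_EFinP; exact: measurable_gamma_integrand.
have f_ge0 x : (0 <= (f x)%:E)%E by rewrite lee_fin gamma_integrand_ge0.
have -> : `]0%R, +oo[%classic = `]0%R, 1%R] `|` `]1%R, +oo[ :> set R.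
  by apply: itv_bndbnd_setU; rewrite bnd_simp.
rewrite ge0_integral_setU //; first last.
- apply/disj_set2P; rewrite -subset0 => x [] /=; rewrite !in_itv /=.
  by move=> /andP[_ x1] /andP[/(le_lt_trans x1)]; rewrite ltxx.
- exact: measurable_funTS.
apply: lte_add_pinfty.
  apply: (@le_lt_trans _ _ s^-1%:E); last exact: ltry.
  apply: le_trans (integral_powR_itvoc01_le s0).
  apply: ge0_le_integral => //.
  - exact: measurable_funTS.
  - by apply/measurable_funTS/measurable_EFinP; exact: measurable_powR.
  move=> x; rewrite /= in_itv /= => /andP[x0 _]; rewrite lee_fin /f.
  by rewrite /gamma_integrand ler_piMr ?powR_ge0 // expR_le1 oppr_le0 ltW.
set C := 2 * expR (s * (ln (2 * s) - 1)).
have C_ge0 : 0 <= C by rewrite mulr_ge0 ?expR_ge0.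
have mp : measurable_fun setT (fun x => (exponential_pdf (2^-1 : R) x)%:E).
  by apply/measurable_EFinP; exact: measurable_exponential_pdf.
have p_ge0 x : (0 <= (exponential_pdf (2^-1 : R) x)%:E)%E.
  by rewrite lee_fin exponential_pdf_ge0.
apply: (@le_lt_trans _ _
  (\int[mu]_(x in `]1%R, +oo[) (C%:E * (exponential_pdf 2^-1 x)%:E))%E).
  apply: ge0_le_integral => //.
  - exact: measurable_funTS.
  - by apply: emeasurable_funM => //; exact: measurable_funTS.
  move=> x; rewrite /= in_itv /= andbT => x1; rewrite -EFinM lee_fin.
  exact: gamma_integrand_le_exponential.
rewrite ge0_integralZl_EFin //; last exact: measurable_funTS.
apply: (@le_lt_trans _ _ (C%:E * 1)%E); last by rewrite mule1 ltry.
apply: lee_pmul => //; first exact: integral_ge0.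
rewrite -(integral_exponential_pdf (R := R) (rate := 2^-1)) //.
exact: ge0_subset_integral.
Qed.

Lemma Gamma_gt0 (s : R) : 0 < s -> 0 < Gamma s.
Proof.
move=> s0; apply: fine_gt0; apply/andP; split.
  by apply: lt_le_trans (integral_gamma_integrand_ge s0); rewrite lte_fin expR_gt0.
exact: integral_gamma_integrand_lt_pinfty.
Qed.

End Gamma_positive.

Section lebesgue_null.
Variable R : realType.

Lemma lebesgue_null_itv_notin (N : set R) (u v : R) :
  measurable N -> lebesgue_measure N = 0%E -> u < v -> exists2 y, u < y < v & ~ N y.
Proof.
move=> mN N0 uv; apply: contrapT => /forall2NP uvN.
have : (lebesgue_measure `]u, v[ <= lebesgue_measure N)%E.
  apply: le_measure; rewrite ?inE //= => y; rewrite /= in_itv /=.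
  by case: (uvN y) => // /contrapT.
by rewrite N0 lebesgue_measure_itv /= lte_fin uv -EFinB lee_fin subr_le0 leNgt uv.
Qed.

Lemma continuous_eq_off_null (f : R -> R) (N : set R) (u v b x : R) :
  measurable N -> lebesgue_measure N = 0%E -> u < x < v -> {for x, continuous f} ->
  (forall y, u < y < v -> ~ N y -> f y = b) -> f x = b.
Proof.
move=> mN N0 /andP[ux xv] fx fb; apply/eqP; apply: contraT => fxb.
have e_gt0 : 0 < `|f x - b| by rewrite normr_gt0 subr_eq0.
move/cvgrPdist_lt: fx => /(_ _ e_gt0) /nbhs_ballP[d d_gt0 near_x].
pose r := Num.min d (Num.min (x - u) (v - x)).
have r_gt0 : 0 < r by rewrite !lt_min d_gt0 !subr_gt0 ux xv.
have [rd rxu rvx] : [/\ r <= d, r <= x - u & r <= v - x].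
  by rewrite !ge_min !lexx !orbT.
have [y /andP[y_gt y_lt] Ny] : exists2 y, x - r < y < x + r & ~ N y.
  by apply: lebesgue_null_itv_notin => //; lra.
have fy : f y = b by apply: fb => //; apply/andP; split; lra.
have : `|f x - f y| < `|f x - b|.
  by apply: near_x; rewrite /ball /= ltr_distlC; apply/andP; split; lra.
by rewrite fy ltxx.
Qed.

End lebesgue_null.

Section log_statistic.
Variable R : realType.

Lemma continuous_ln_ln1m (a1 a2 y : R) : 0 < y < 1 ->
  {for y, continuous (fun z => a1 * ln z + a2 * ln (1 - z))}.
Proof.
move=> /andP[y0 y1]; apply: continuousD; apply: continuousM; do ?exact: cst_continuous.
  exact: continuous_ln.
apply: continuous_comp; last by apply: continuous_ln; rewrite subr_gt0.
by apply: continuousB; [exact: cst_continuous | exact: cvg_id].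
Qed.

(* Evaluate at [1/4], [3/4] and [1/2]. *)
Lemma ln_ln1m_const_eq0 (a1 a2 b : R) :
  (forall y, 0 < y < 1 -> a1 * ln y + a2 * ln (1 - y) = b) ->
  [/\ a1 = 0, a2 = 0 & b = 0].
Proof.
move=> const.
have E1 := const 4^-1 ltac:(apply/andP; split; lra).
have E2 := const (1 - 4^-1) ltac:(apply/andP; split; lra).
have E3 := const 2^-1 ltac:(apply/andP; split; lra).
rewrite (_ : 1 - (1 - 4^-1) = 4^-1) in E2; last by ring.
rewrite (_ : 1 - 2^-1 = 2^-1) in E3; last by field.
have ln_lt : ln (4^-1 : R) - ln (1 - 4^-1) < 0.
  by rewrite subr_lt0 ltr_ln ?posrE; lra.
have ln_prod_lt : ln (4^-1 : R) + ln (1 - 4^-1) - (ln 2^-1 + ln 2^-1) < 0.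
  by rewrite subr_lt0 -!lnM ?posrE ?ltr_ln ?posrE ?mulr_gt0; lra.
have a12 : a1 = a2.
  have /eqP : (a1 - a2) * (ln 4^-1 - ln (1 - 4^-1)) = 0.
    by rewrite -(subrr b) -{1}E1 -E2; ring.
  by rewrite mulf_eq0 (lt_eqF ln_lt) orbF subr_eq0 => /eqP.
have a1_0 : a1 = 0.
  have /eqP : a1 * (ln 4^-1 + ln (1 - 4^-1) - (ln 2^-1 + ln 2^-1)) = 0.
    by rewrite -(subrr b) -{1}E1 -E3 -a12; ring.
  by rewrite mulf_eq0 (lt_eqF ln_prod_lt) orbF => /eqP.
by split; rewrite -?E3 -?a12 a1_0 ?mul0r ?addr0.
Qed.

End log_statistic.

Notation i0 := (@Ordinal 3 0 isT).
Notation i1 := (@Ordinal 3 1 isT).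
Notation i2 := (@Ordinal 3 2 isT).

Section linear_forms.
Variable R : realType.

Lemma const_dotv_on_rect_eq0 (k : nat) (a lo hi : 'I_k -> R) (b : R) :
  (forall i, lo i < hi i) ->
  (forall x, (forall i, lo i < x i < hi i) -> dotv a x = b) ->
  forall i, a i = 0.
Proof.
move=> lohi a_const i.
pose m j := (lo j + hi j) / 2.
pose t := (hi i - lo i) / 4.
have t_gt0 : 0 < t by rewrite divr_gt0 // subr_gt0.
pose x (e : R) j := m j + (j == i)%:R * e.
have x_rect e : 0 <= e <= t -> forall j, lo j < x e j < hi j.
  move=> /andP[e0 et] j; have := lohi j; move: et; rewrite /x /m /t.
  by case: eqVneq => [->|_]; rewrite ?mul1r ?mul0r => ? ?; apply/andP; split; lra.
have dotv_x e : dotv a (x e) = dotv a m + a i * e.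
  have -> : dotv a (x e) = \sum_j (a j * m j + (j == i)%:R * (a j * e)).
    by apply: eq_bigr => j _; rewrite /x; ring.
  rewrite big_split; congr (_ + _).
  rewrite (bigD1 i) //= eqxx mul1r big1 ?addr0 // => j /negbTE ->.
  exact: mul0r.
have b_eq : dotv a m = b.
  rewrite -[LHS]addr0 -(mulr0 (a i)) -dotv_x.
  by apply/a_const/x_rect; rewrite lexx ltW.
have : dotv a m + a i * t = b.
  by rewrite -dotv_x; apply/a_const/x_rect; rewrite lexx ltW.
rewrite b_eq -[RHS]addr0 => /addrI /eqP.
by rewrite mulf_eq0 (gt_eqF t_gt0) orbF => /eqP.
Qed.

Lemma forall_ord3 (P : 'I_3 -> Prop) : P i0 -> P i1 -> P i2 -> forall i, P i.
Proof.
move=> P0 P1 P2 [[|[|[|//]]] i3]; rewrite (bool_irrelevance i3 isT).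
- exact: P0.
- exact: P1.
- exact: P2.
Qed.

Lemma dotv3 (a b : 'I_3 -> R) : dotv a b = a i0 * b i0 + a i1 * b i1 + a i2 * b i2.
Proof.
rewrite /dotv !big_ord_recl big_ord0 addr0 addrA.
by congr (_ * _ + _ * _ + _ * _); congr (_ _); apply: val_inj.
Qed.

Definition vec3 (p q r : R) : 'I_3 -> R := fun i =>
  match val i with 0 => p | 1 => q | _ => r end.

Lemma dotv_vec3 (p q r p' q' r' : R) :
  dotv (vec3 p q r) (vec3 p' q' r') = p * p' + q * q' + r * r'.
Proof. by rewrite dotv3. Qed.

End linear_forms.

Section inflated_beta.
Variable R : realType.

Lemma nu_null (c : R) (N : set (measurableTypeR R)) :
  measurable N -> nu c N = 0%E ->
  lebesgue_measure (N `&` `]0, 1[) = 0%E /\ ~ N c.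
Proof.
move=> mN N0.
have : (mrestr (@lebesgue_measure R) (measurable_itv `]0%R, 1%R[) N + \d_c N = 0)%E.
  by rewrite -N0; apply/esym; exact: (measure_addE _ _ N).
rewrite /mrestr diracE => /eqP.
rewrite padde_eq0 ?measure_ge0 ?lee_fin // => /andP[/eqP -> /eqP cN].
by split => // Nc; move: cN; rewrite mem_set // => -[] /eqP; rewrite oner_eq0.
Qed.

Definition beta_const (mu phi : R) : R :=
  Gamma phi / (Gamma (mu * phi) * Gamma ((1 - mu) * phi)).

Lemma beta_const_gt0 (mu phi : R) : 0 < mu < 1 -> 0 < phi -> 0 < beta_const mu phi.
Proof.
move=> /andP[mu0 mu1] phi0.
by rewrite divr_gt0 ?mulr_gt0 ?Gamma_gt0 ?mulr_gt0 ?subr_gt0.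
Qed.

Definition nat_param (th : R * R * R) : 'I_3 -> R :=
  let: (alpha, mu, phi) := th in
  vec3 (ln (alpha / (1 - alpha)) - ln (beta_const mu phi)) (mu * phi) ((1 - mu) * phi).

Definition suff_stat (c y : R) : 'I_3 -> R :=
  if y == c then vec3 1 0 0 else vec3 0 (ln y) (ln (1 - y)).

(* [mu] and [phi] are recovered from [x i1 = mu phi] and [x i2 = (1 - mu) phi]. *)
Definition log_partition (x : 'I_3 -> R) : R :=
  let B := beta_const (x i1 / (x i1 + x i2)) (x i1 + x i2) in
  ln (1 + expR (x i0) * B) - ln B.

Definition carrier_density (c y : R) : R := if y == c then 1 else (y * (1 - y))^-1.

Lemma carrier_density_gt0 (c y : R) : Ysupp c y -> 0 < carrier_density c y.
Proof.
rewrite /carrier_density; case: eqVneq => // yc [|/= yc'].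
  by rewrite /= in_itv /= => /andP[y0 y1]; rewrite invr_gt0 mulr_gt0 ?subr_gt0.
by rewrite yc' eqxx in yc.
Qed.

Lemma log_partition_nat_param (alpha mu phi : R) :
  0 < alpha < 1 -> 0 < mu < 1 -> 0 < phi ->
  log_partition (nat_param (alpha, mu, phi)) =
  - ln (1 - alpha) - ln (beta_const mu phi).
Proof.
move=> /andP[a0 a1] mu01 phi0; have B0 := beta_const_gt0 mu01 phi0.
rewrite /log_partition /vec3 /= -mulrDl (addrC mu) subrK mul1r mulfK ?gt_eqF //.
rewrite expRD expRN [expR (ln (beta_const _ _))]lnK ?posrE //.
rewrite lnK ?posrE ?divr_gt0 ?subr_gt0 // divfK ?gt_eqF //.
rewrite (_ : 1 + alpha / (1 - alpha) = (1 - alpha)^-1); last by field; lra.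
by rewrite lnV ?posrE ?subr_gt0.
Qed.

Lemma bi_exp_form (c : R) (th : R * R * R) (y : R) : Theta th -> Ysupp c y ->
  bi c th y = expR (dotv (nat_param th) (suff_stat c y) - log_partition (nat_param th))
              * carrier_density c y.
Proof.
case: th => [[alpha mu] phi] [/= alpha01 [mu01 phi0]] Yy.
have B0 := beta_const_gt0 mu01 phi0.
have /andP[a0 a1] := alpha01.
rewrite /bi /suff_stat /carrier_density log_partition_nat_param //.
case: eqVneq => [_|yc].
  rewrite dotv_vec3 mulr1 !mulr0 !addr0 mulr1.
  rewrite (_ : _ - _ - _ = ln (alpha / (1 - alpha)) + ln (1 - alpha)); last by ring.
  rewrite -lnM ?posrE ?divr_gt0 ?subr_gt0 // divfK ?lnK ?posrE //.
  by rewrite gt_eqF // subr_gt0.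
have /andP[y0 y1] : 0 < y < 1.
  by case: Yy => [|/= yc']; [rewrite /= in_itv | rewrite yc' eqxx in yc].
rewrite dotv_vec3 /= mulr0 add0r /beta_density /powR !gt_eqF ?subr_gt0 //.
have -> : (y * (1 - y))^-1 = expR (- (ln y + ln (1 - y))).
  by rewrite expRN expRD !lnK ?posrE ?subr_gt0.
rewrite -/(beta_const mu phi) -{1}[beta_const mu phi]lnK ?posrE //.
rewrite -{1}[1 - alpha]lnK ?posrE ?subr_gt0 // -!expRD; congr expR; ring.
Qed.

Lemma nat_param_inj (th1 th2 : R * R * R) : Theta th1 -> Theta th2 ->
  nat_param th1 = nat_param th2 -> th1 = th2.
Proof.
case: th1 th2 => [[a1 m1] p1] [[a2 m2] p2].
move=> [/= /andP[a10 a11] [/andP[m10 m11] p10]].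
move=> [/= /andP[a20 a21] [/andP[m20 m21] p20]] E.
have := congr1 (fun f => f i0) E; have := congr1 (fun f => f i1) E.
have := congr1 (fun f => f i2) E; rewrite /vec3 /= => e2 e1 e0.
have pp : p1 = p2 by nra.
subst p2; have mm : m1 = m2 by exact: (mulIf (lt0r_neq0 p10) e1).
subst m2; have : ln (a1 / (1 - a1)) = ln (a2 / (1 - a2)) by lra.
move/ln_inj; rewrite !posrE !divr_gt0 ?subr_gt0 // => /(_ isT isT) ea.
have logistic (a : R) : a < 1 -> a = (a / (1 - a)) / (1 + a / (1 - a)).
  by move=> a_lt1; field; lra.
by rewrite (logistic a1) // ea -logistic.
Qed.

Lemma nat_param_surj (x : 'I_3 -> R) : 0 < x i1 -> 0 < x i2 ->
  exists2 th, Theta th & nat_param th = x.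
Proof.
move=> x1 x2; pose phi := x i1 + x i2; pose mu := x i1 / phi.
have phi0 : 0 < phi by rewrite addr_gt0.
have mu01 : 0 < mu < 1.
  by rewrite divr_gt0 //= ltr_pdivrMr // mul1r ltrDl.
pose e := expR (x i0) * beta_const mu phi; pose alpha := e / (1 + e).
have e0 : 0 < e by rewrite mulr_gt0 ?expR_gt0 ?beta_const_gt0.
have alpha01 : 0 < alpha < 1.
  by rewrite divr_gt0 ?addr_gt0 //= ltr_pdivrMr ?addr_gt0 // mul1r ltrDr.
exists (alpha, mu, phi); first by [].
apply/funext; apply: forall_ord3; rewrite /vec3 /=.
- rewrite (_ : alpha / (1 - alpha) = e); last by rewrite /alpha; field; lra.
  by rewrite lnM ?posrE ?expR_gt0 ?beta_const_gt0 // expRK addrK.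
- by rewrite divfK ?gt_eqF.
- by rewrite mulrBl mul1r divfK ?gt_eqF // /phi addrAC subrr add0r.
Qed.

Lemma ae_const_dotv_suff_stat_eq0 (c : R) (a : 'I_3 -> R) (b : R) :
  {ae nu c, forall y, Ysupp c y -> dotv a (suff_stat c y) = b} -> forall i, a i = 0.
Proof.
move=> [N [mN /(nu_null mN)[N01 Nc] sub]].
have off_N y : ~ N y -> Ysupp c y -> dotv a (suff_stat c y) = b.
  by move=> Ny; apply: contrapT => nP; apply: Ny; exact: sub.
have a0 : a i0 = b.
  rewrite -(off_N c Nc (or_intror erefl)) dotv3 /suff_stat eqxx /=.
  by rewrite mulr1 !mulr0 !addr0.
pose M := (N `&` `]0, 1[) `|` [set c].
have mM : measurable M by apply: measurableU => //; exact: measurableI.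
have M0 : lebesgue_measure M = 0%E.
  apply/eqP; rewrite eq_le measure_ge0 andbT.
  apply: le_trans (measureU2 _ _ _) _ => //; first exact: measurableI.
  rewrite (_ : (_ + _)%E = 0%E) // -[RHS](adde0 0).
  by congr (_ + _)%E; [exact: N01 | exact: lebesgue_measure_set1].
have g_const y : 0 < y < 1 -> a i1 * ln y + a i2 * ln (1 - y) = b.
  move=> y01; apply: (continuous_eq_off_null
    (f := fun z => a i1 * ln z + a i2 * ln (1 - z)) mM M0 y01).
    exact: continuous_ln_ln1m.
  move=> z z01 Mz; have zc : z != c by apply/eqP => zc; apply: Mz; right.
  rewrite -(off_N z); first by rewrite dotv3 /suff_stat (negbTE zc) /= mulr0 add0r.
    by move=> Nz; apply: Mz; left; split; rewrite //= in_itv.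
  by left; rewrite /= in_itv.
have [a1 a2 b0] := ln_ln1m_const_eq0 g_const.
by apply: forall_ord3; rewrite // a0.
Qed.

End inflated_beta.

Unset Implicit Arguments.

Theorem proposition1 (R : realType) (c : R) :
  c = 0 \/ c = 1 ->
  full_rank_exp_family (nu c) (Ysupp c) (@Theta R) 3 (bi c).
Proof.
(* The position of the atom is irrelevant. *)
move=> _.
have rect (x : 'I_3 -> R) :
    (forall i, 1 < x i < 2) -> exists2 th, Theta th & nat_param th = x.
  move=> x12; apply: nat_param_surj.
    by case/andP: (x12 i1) => /(lt_trans ltr01).
  by case/andP: (x12 i2) => /(lt_trans ltr01).
exists (@nat_param R), (suff_stat c), (@log_partition R), (carrier_density c).
split; first exact: nat_param_inj.
split; first by move=> y; exact: carrier_density_gt0.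
split; first by move=> th y; exact: bi_exp_form.
split; first exact: ae_const_dotv_suff_stat_eq0.
have lt12 (i : 'I_3) : (1 : R) < 2 by rewrite ltr1n.
split; last by exists (fun=> 1), (fun=> 2).
move=> a b a_const; apply: (const_dotv_on_rect_eq0 lt12).
by move=> x /rect[th Th <-]; exact: a_const.
Qed.
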